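(* Let $\Lambda,\mu,\beta,\alpha,\gamma,\delta>0$, $\sigma\in[0,1)$, $\xi\ge 0$, $N_{old},\kappa,\kappa_{old}\in[0,1]$, and set $\Delta=\delta\left[(1-\kappa_{old})N_{old}+(1-\kappa)(1-N_{old})\right]$. Consider the system \begin{align*} \frac{dS}{dt}&=\Lambda-\mu S-\beta(1-\sigma)SI+\xi R,\\ \frac{dE}{dt}&=\beta(1-\sigma)SI-(\mu+\alpha)E,\\ \frac{dI}{dt}&=\alpha E-(\mu+\gamma)I-\Delta I,\\ \frac{dR}{dt}&=\gamma I-\mu R-\xi R, \end{align*} and define $$R_0=\frac{\alpha\beta\Lambda(1-\sigma)}{\mu(\mu+\alpha)(\mu+\gamma+\Delta)}.$$ Let $E_{EE}=(S^*,E^*,I^*,R^* )$ denote the endemic equilibrium, i.e. the equilibrium of this system with $S^*=\frac{\Lambda}{\mu R_0}$ and $E^*,I^*,R^*>0$. If $R_0>1$, then $E_{EE}$ is a locally asymptotically stable equilibrium of this system.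
   Context: This is the $(S,E,I,R)$ part of a modified SEIRS epidemic model (the death compartment $D$, with $dD/dt=\Delta I$, does not feed back and is omitted). $\Lambda$ is a birth rate, $\mu$ a natural death rate, $\beta$ the transmission rate, $\alpha$ the rate of becoming infectious, $\gamma$ the recovery rate, $\sigma$ the control-action efficiency, $\xi$ the resusceptibility fraction, $\Delta$ the COVID-19 death rate, and $R_0$ the basic reproduction number with control action. When $R_0>1$ there is exactly one equilibrium with positive $E,I,R$ components, and it has $S^*=\Lambda/(\mu R_0)$. *)

From Stdlib Require Import Reals.
From Coquelicot Require Import Coquelicot.
Open Scope R_scope.

Definition Delta_rate (delta kappa kappa_old N_old : R) : R :=
  delta * ((1 - kappa_old) * N_old + (1 - kappa) * (1 - N_old)).

Definition repro_number (Lam mu beta alpha gamma sigma Dl : R) : R :=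
  alpha * beta * Lam * (1 - sigma) / (mu * (mu + alpha) * (mu + gamma + Dl)).

Definition state : Type := (R * R * R * R)%type.

Definition seir_field (Lam mu beta alpha gamma sigma xi Dl : R) (x : state) : state :=
  let '(s, e, i, r) := x in
  (Lam - mu * s - beta * (1 - sigma) * s * i + xi * r,
   beta * (1 - sigma) * s * i - (mu + alpha) * e,
   alpha * e - (mu + gamma) * i - Dl * i,
   gamma * i - mu * r - xi * r).

Definition is_equilibrium (F : state -> state) (p : state) : Prop :=
  F p = (0, 0, 0, 0).

Definition dist4 (x y : state) : R :=
  let '(a1, b1, c1, d1) := x in
  let '(a2, b2, c2, d2) := y in
  sqrt ((a1 - a2)^2 + (b1 - b2)^2 + (c1 - c2)^2 + (d1 - d2)^2).

Definition is_solution (F : state -> state)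
  (Sf Ef If Rf : R -> R) : Prop :=
  (filterlim Sf (at_right 0) (locally (Sf 0)) /\
   filterlim Ef (at_right 0) (locally (Ef 0)) /\
   filterlim If (at_right 0) (locally (If 0)) /\
   filterlim Rf (at_right 0) (locally (Rf 0))) /\
  forall t, 0 < t ->
    let '(fS, fE, fI, fR) := F (Sf t, Ef t, If t, Rf t) in
    is_derive Sf t fS /\ is_derive Ef t fE /\ is_derive If t fI /\ is_derive Rf t fR.

Definition locally_asymptotically_stable (F : state -> state) (p : state) : Prop :=
  is_equilibrium F p /\
  (forall eps, 0 < eps -> exists d, 0 < d /\
     forall Sf Ef If Rf, is_solution F Sf Ef If Rf ->
       dist4 (Sf 0, Ef 0, If 0, Rf 0) p < d ->
       forall t, 0 <= t -> dist4 (Sf t, Ef t, If t, Rf t) p < eps) /\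
  (exists d0, 0 < d0 /\
     forall Sf Ef If Rf, is_solution F Sf Ef If Rf ->
       dist4 (Sf 0, Ef 0, If 0, Rf 0) p < d0 ->
       is_lim (fun t => dist4 (Sf t, Ef t, If t, Rf t) p) p_infty 0).

(* Write p = beta (1 - sigma) Is, m1 = mu + alpha, m2 = mu + gamma + Delta,
   tau = xi gamma / (beta (1 - sigma) Ss) <= xi and kappa = mu + xi - tau > 0, and measure the
   deviation from the equilibrium (Ss, Es, Is, Rs) in the coordinates
     x = (S - Ss) / Ss,   y = (E - Es) / Es - (I - Is) / Is,
     q = (I - Is) / Is - tau (R - Rs) / (gamma Is),   t = kappa (R - Rs) / (gamma Is),
   so that q + (tau / kappa) t = (I - Is) / Is.  The choice of tau cancels the feedback of R in
   the S-equation, and the equilibrium equations turn the system into [reduced_field]: a linear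
   part plus the quadratic term p x (q + (tau / kappa) t).  Along it the derivative of the
   positive definite quadratic form [lyap] is a negative definite quadratic form plus a cubic
   one, V' <= - b |z|^2 + K |z|^3.  Hence V' <= - c V wherever V is below a fixed threshold; a
   real-induction argument shows that a solution starting under the threshold stays there, so
   V, and with it the distance to the equilibrium, decays exponentially. *)

From Stdlib Require Import Reals Lra Psatz Classical.
From Coquelicot Require Import Coquelicot.
Open Scope R_scope.

Definition right_continuous (f : R -> R) (t : R) : Prop :=
  filterlim f (at_right t) (locally (f t)).

Lemma right_continuous_of_derive (f : R -> R) (t df : R) :
  is_derive f t df -> right_continuous f t.
Proof.
  intros Hf.
  apply (filterlim_filter_le_1 _ (filter_le_within _)).
  apply (ex_derive_continuous (V := R_NormedModule)).
  now exists df.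
Qed.

Lemma right_continuous_const (c t : R) : right_continuous (fun _ => c) t.
Proof. apply filterlim_const. Qed.

Lemma right_continuous_plus (f g : R -> R) (t : R) :
  right_continuous f t -> right_continuous g t ->
  right_continuous (fun s => f s + g s) t.
Proof.
  intros Hf Hg.
  eapply filterlim_comp_2; [exact Hf | exact Hg | apply (filterlim_plus (f t) (g t))].
Qed.

Lemma right_continuous_mult (f g : R -> R) (t : R) :
  right_continuous f t -> right_continuous g t ->
  right_continuous (fun s => f s * g s) t.
Proof.
  intros Hf Hg.
  eapply filterlim_comp_2; [exact Hf | exact Hg | apply (filterlim_mult (f t) (g t))].
Qed.

Lemma right_continuous_opp (f : R -> R) (t : R) :
  right_continuous f t -> right_continuous (fun s => - f s) t.
Proof. intros Hf. eapply filterlim_comp; [exact Hf | apply (filterlim_opp (f t))]. Qed.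

Lemma right_continuous_pow (f : R -> R) (n : nat) (t : R) :
  right_continuous f t -> right_continuous (fun s => f s ^ n) t.
Proof.
  intros Hf. induction n as [| n IH]; simpl.
  - apply right_continuous_const.
  - now apply right_continuous_mult.
Qed.

Ltac right_continuity :=
  lazymatch goal with
  | |- right_continuous (fun _ => ?c) _ => apply right_continuous_const
  | |- right_continuous (fun s => @?f s + @?g s) _ =>
      apply (right_continuous_plus f g); right_continuity
  | |- right_continuous (fun s => @?f s * @?g s) _ =>
      apply (right_continuous_mult f g); right_continuity
  | |- right_continuous (fun s => - @?f s) _ =>
      apply (right_continuous_opp f); right_continuity
  | |- right_continuous (fun s => @?f s ^ ?n) _ =>
      apply (right_continuous_pow f n); right_continuity
  | |- _ => assumption
  end.

Lemma right_continuous_eventually_lt (f : R -> R) (t A : R) :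
  right_continuous f t -> f t < A ->
  exists d, 0 < d /\ forall s, t < s < t + d -> f s < A.
Proof.
  intros Hf HA.
  destruct (proj1 (filterlim_locally f (f t)) Hf (mkposreal _ (proj2 (Rlt_0_minus _ _) HA)))
    as [d Hd].
  exists d; split; [apply cond_pos |].
  intros s [Hts Hsd].
  assert (Hball : ball t d s).
  { apply Rabs_lt_between'; lra. }
  specialize (Hd s Hball Hts).
  apply Rabs_lt_between' in Hd; simpl in Hd; lra.
Qed.

Lemma right_continuous_ge (f : R -> R) (t b c : R) :
  right_continuous f t -> t < b -> (forall s, t < s < b -> c <= f s) -> c <= f t.
Proof.
  intros Hf Htb Hc.
  apply (filterlim_le (F := at_right t) (fun _ => c) f c (f t)).
  - exists (mkposreal _ (proj2 (Rlt_0_minus _ _) Htb)); intros s Hs Hts.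
    apply Rabs_lt_between' in Hs; simpl in Hs.
    apply Hc; lra.
  - apply filterlim_const.
  - exact Hf.
Qed.

Lemma nonincreasing_of_derive_nonpos (h dh : R -> R) (a b : R) :
  a < b -> right_continuous h a ->
  (forall s, a < s <= b -> is_derive h s (dh s)) ->
  (forall s, a < s < b -> dh s <= 0) ->
  h b <= h a.
Proof.
  intros Hab Hra Hd Hsign.
  apply (right_continuous_ge h a b); [exact Hra | exact Hab |].
  intros s Hs.
  destruct (MVT_cor2 h dh s b ltac:(lra)) as [c [Hmvt Hc]].
  { intros c Hc; apply is_derive_Reals, Hd; lra. }
  assert (dh c <= 0) by (apply Hsign; lra).
  nra.
Qed.

Lemma real_induction (P : R -> Prop) (a : R) :
  (forall t, a <= t -> (forall s, a <= s < t -> P s) -> P t) ->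
  (forall t, a <= t -> (forall s, a <= s <= t -> P s) ->
     exists d, 0 < d /\ forall s, t < s < t + d -> P s) ->
  forall t, a <= t -> P t.
Proof.
  intros Hclosed Hopen T HT.
  set (E := fun t => a <= t <= T /\ forall s, a <= s <= t -> P s).
  assert (HEa : E a).
  { split; [lra |]. intros s Hs; replace s with a by lra.
    apply Hclosed; [lra | intros; lra]. }
  destruct (completeness E) as [L [HLub HLleast]].
  { exists T; intros t [Ht _]; lra. }
  { now exists a. }
  assert (HaL : a <= L) by now apply HLub.
  assert (Hbelow : forall s, a <= s < L -> P s).
  { intros s Hs. apply NNPP; intros HnP.
    assert (L <= s); [| lra].
    apply HLleast; intros e [_ He].
    destruct (Rle_lt_dec e s) as [? | Hse]; [assumption |].
    exfalso; apply HnP, He; lra. }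
  assert (HL : forall s, a <= s <= L -> P s).
  { intros s Hs. destruct (Req_dec s L) as [-> |].
    - apply Hclosed; assumption.
    - apply Hbelow; lra. }
  destruct (Rlt_le_dec L T) as [HLT' | HTL]; [exfalso | apply HL; lra].
  destruct (Hopen L HaL HL) as [d [Hd Hnext]].
  assert (E (Rmin (L + d / 2) T)).
  { split; [split; [apply Rmin_glb; lra | apply Rmin_r] |].
    intros s Hs. destruct (Rle_lt_dec s L).
    - apply HL; lra.
    - apply Hnext. pose proof (Rmin_l (L + d / 2) T); lra. }
  assert (Rmin (L + d / 2) T <= L) by now apply HLub.
  assert (L < Rmin (L + d / 2) T) by (apply Rmin_glb_lt; lra).
  lra.
Qed.

Lemma exp_neg_le_1 (c t : R) : 0 <= c -> 0 <= t -> exp (- c * t) <= 1.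
Proof.
  intros Hc Ht. rewrite <- exp_0.
  destruct (Req_dec (- c * t) 0) as [-> | Hne]; [lra |].
  left; apply exp_increasing; nra.
Qed.

Lemma exp_decay_of_lyapunov (W dW : R -> R) (c A : R) :
  0 < c -> right_continuous W 0 ->
  (forall t, 0 < t -> is_derive W t (dW t)) ->
  (forall t, 0 < t -> W t < A -> dW t <= - c * W t) ->
  0 <= W 0 < A ->
  forall t, 0 <= t -> W t <= W 0 * exp (- c * t).
Proof.
  intros Hc HW0 HdW Hrate HA.
  (* [W t * exp (c t)] does not increase as long as [W] stays below [A]. *)
  assert (Hdecay : forall t, 0 <= t -> (forall s, 0 <= s < t -> W s < A) ->
            W t <= W 0 * exp (- c * t)).
  { intros t Ht Hbelow.
    assert (Hexp : exp (c * t) * exp (- c * t) = 1).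
    { rewrite <- exp_plus. replace (c * t + - c * t) with 0 by ring. apply exp_0. }
    assert (Hmono : W t * exp (c * t) <= W 0 * exp (c * 0)).
    { destruct (Req_dec t 0) as [-> | Ht0]; [lra |].
      apply (nonincreasing_of_derive_nonpos (fun s => W s * exp (c * s))
               (fun s => dW s * exp (c * s) + W s * (c * exp (c * s)))); [lra | | |].
      - apply right_continuous_mult; [exact HW0 |].
        apply (right_continuous_of_derive _ _ (c * exp (c * 0))). auto_derive; auto; ring.
      - intros s Hs. apply (is_derive_mult W (fun s => exp (c * s))); [apply HdW; lra | | ].
        + auto_derive; auto; ring.
        + intros; apply Rmult_comm.
      - intros s Hs. pose proof (Hrate s (proj1 Hs) (Hbelow s ltac:(lra))).
        pose proof (exp_pos (c * s)). nra. }
    rewrite Rmult_0_r, exp_0, Rmult_1_r in Hmono.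
    pose proof (exp_pos (- c * t)).
    replace (W t) with (W t * exp (c * t) * exp (- c * t)) by (rewrite Rmult_assoc, Hexp; ring).
    apply Rmult_le_compat_r; lra. }
  assert (Hstay : forall t, 0 <= t -> W t < A).
  { apply real_induction.
    - intros t Ht Hbelow. pose proof (Hdecay t Ht Hbelow).
      pose proof (exp_neg_le_1 c t ltac:(lra) Ht). nra.
    - intros t Ht Hbelow. apply right_continuous_eventually_lt; [| apply Hbelow; lra].
      destruct (Req_dec t 0) as [-> | Ht0]; [exact HW0 |].
      apply (right_continuous_of_derive _ _ (dW t)), HdW; lra. }
  intros t Ht. apply Hdecay; [exact Ht |]. intros s Hs; apply Hstay; lra.
Qed.

Definition cubic_lyapunov (g : R -> R) (m M be K : R) : Prop :=
  exists W dW : R -> R,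
    right_continuous W 0 /\
    (forall t, 0 < t -> is_derive W t (dW t)) /\
    (forall t, 0 <= t -> m * g t ^ 2 <= W t <= M * g t ^ 2) /\
    (forall t, 0 < t -> dW t <= - be * g t ^ 2 + K * g t ^ 3).

Lemma lyapunov_rate_of_cubic (g w dw m M be K : R) :
  0 < m -> 0 < M -> 0 < be -> 0 < K -> 0 <= g ->
  m * g ^ 2 <= w <= M * g ^ 2 -> dw <= - be * g ^ 2 + K * g ^ 3 ->
  w < m * (be / (2 * K)) ^ 2 -> dw <= - (be / (2 * M)) * w.
Proof.
  intros Hm HM Hbe HK Hg [Hlo Hhi] Hdw Hsmall.
  assert (Hr : 0 < be / (2 * K)) by (apply Rdiv_lt_0_compat; lra).
  assert (Hgr : g < be / (2 * K)).
  { apply Rnot_le_lt; intros Hge.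
    assert ((be / (2 * K)) ^ 2 <= g ^ 2) by (apply pow_incr; lra). nra. }
  assert (HKg : K * g <= be / 2).
  { replace (be / 2) with (K * (be / (2 * K))) by (field; lra).
    apply Rmult_le_compat_l; lra. }
  assert (Hw : be / (2 * M) * w <= be / 2 * g ^ 2).
  { replace (be / 2 * g ^ 2) with (be / (2 * M) * (M * g ^ 2)) by (field; lra).
    apply Rmult_le_compat_l; [apply Rlt_le, Rdiv_lt_0_compat |]; lra. }
  assert (K * g ^ 3 <= be / 2 * g ^ 2) by (replace (K * g ^ 3) with (K * g * g ^ 2) by ring; nra).
  lra.
Qed.

Lemma cubic_lyapunov_equiv (g h : R -> R) (m M be K a b : R) :
  0 <= m -> 0 <= M -> 0 <= be -> 0 <= K -> 0 < a -> 0 < b ->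
  (forall t, 0 <= t -> 0 <= g t) ->
  (forall t, 0 <= t -> a * g t <= h t <= b * g t) ->
  cubic_lyapunov h m M be K ->
  cubic_lyapunov g (m * a ^ 2) (M * b ^ 2) (be * a ^ 2) (K * b ^ 3).
Proof.
  intros Hm HM Hbe HK Ha Hb Hg Hequiv [W [dW [HW0 [HdW [Hbounds Hcubic]]]]].
  exists W, dW; split; [exact HW0 | split; [exact HdW | split; [intros t Ht; split |]]].
  - destruct (Hequiv t Ht). destruct (Hbounds t Ht). pose proof (Hg t Ht).
    assert ((a * g t) ^ 2 <= h t ^ 2) by (apply pow_incr; nra). nra.
  - destruct (Hequiv t Ht). destruct (Hbounds t Ht). pose proof (Hg t Ht).
    assert (h t ^ 2 <= (b * g t) ^ 2) by (apply pow_incr; nra). nra.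
  - intros t Ht. destruct (Hequiv t (Rlt_le _ _ Ht)). pose proof (Hg t (Rlt_le _ _ Ht)).
    pose proof (Hcubic t Ht).
    assert ((a * g t) ^ 2 <= h t ^ 2) by (apply pow_incr; nra).
    assert (h t ^ 3 <= (b * g t) ^ 3) by (apply pow_incr; nra).
    nra.
Qed.

Lemma sq_exp_decay_of_cubic_lyapunov (g : R -> R) (m M be K : R) :
  0 < m -> 0 < M -> 0 < be -> 0 < K ->
  (forall t, 0 <= t -> 0 <= g t) ->
  cubic_lyapunov g m M be K ->
  forall c, 0 < c <= be / (2 * K) -> g 0 < c * sqrt (m / M) ->
  forall t, 0 <= t -> g t ^ 2 < c ^ 2 * exp (- (be / (2 * M)) * t).
Proof.
  intros Hm HM Hbe HK Hg [W [dW [HW0 [HdW [Hbounds Hcubic]]]]] c Hc Hg0 t Ht.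
  assert (Hsq : (c * sqrt (m / M)) ^ 2 = c ^ 2 * m / M).
  { rewrite Rpow_mult_distr, pow2_sqrt by (apply Rlt_le, Rdiv_lt_0_compat; lra).
    field; lra. }
  assert (HW0small : W 0 < m * c ^ 2).
  { pose proof (Hg 0 (Rle_refl 0)) as Hg0pos.
    assert (g 0 ^ 2 < c ^ 2 * m / M).
    { rewrite <- Hsq. pose proof (sqrt_pos (m / M)). nra. }
    destruct (Hbounds 0 (Rle_refl 0)) as [_ HW0M].
    apply Rle_lt_trans with (M * g 0 ^ 2); [exact HW0M |].
    replace (m * c ^ 2) with (M * (c ^ 2 * m / M)) by (field; lra).
    apply Rmult_lt_compat_l; lra. }
  assert (Hdecay : W t <= W 0 * exp (- (be / (2 * M)) * t)).
  { apply (exp_decay_of_lyapunov W dW _ (m * c ^ 2));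
      [apply Rdiv_lt_0_compat; lra | exact HW0 | exact HdW | | | exact Ht].
    - intros s Hs HWs.
      apply (lyapunov_rate_of_cubic (g s) (W s) (dW s) m M be K); auto;
        [apply Hg, Rlt_le, Hs | apply Hbounds; lra |].
      assert (c ^ 2 <= (be / (2 * K)) ^ 2) by (apply pow_incr; lra). nra.
    - split; [| exact HW0small].
      destruct (Hbounds 0 (Rle_refl 0)). pose proof (pow2_ge_0 (g 0)). nra. }
  destruct (Hbounds t Ht) as [Hlo _].
  pose proof (exp_pos (- (be / (2 * M)) * t)).
  apply Rmult_lt_reg_l with m; [exact Hm |]. nra.
Qed.

Lemma is_lim_exp_neg (C k : R) : 0 < k -> is_lim (fun t => C * exp (- k * t)) p_infty 0.
Proof.
  intros Hk.
  replace (Finite 0) with (Rbar_mult C 0) by (simpl; f_equal; ring).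
  apply is_lim_scal_l, (is_lim_comp exp (fun t => - k * t) p_infty 0 m_infty).
  - exact is_lim_exp_m.
  - replace m_infty with (Rbar_mult (- k) p_infty).
    + apply is_lim_scal_l, is_lim_id.
    + rewrite Rbar_mult_comm. apply is_Rbar_mult_unique, is_Rbar_mult_p_infty_neg.
      simpl; lra.
  - exists 0; intros; discriminate.
Qed.

Lemma is_lim_zero_of_sq_exp_bound (g : R -> R) (C k : R) :
  0 < k -> (forall t, 0 <= t -> 0 <= g t) ->
  (forall t, 0 <= t -> g t ^ 2 <= C * exp (- k * t)) ->
  is_lim g p_infty 0.
Proof.
  intros Hk Hg Hbound. apply is_lim_spec; intros eps.
  assert (Heps2 : 0 < eps * eps) by (pose proof (cond_pos eps); nra).
  destruct (proj2 (is_lim_spec _ _ _) (is_lim_exp_neg C k Hk) (mkposreal _ Heps2)) as [T HT].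
  exists (Rmax T 0); intros t Ht; simpl.
  pose proof (Rmax_l T 0); pose proof (Rmax_r T 0).
  specialize (HT t ltac:(lra)). simpl in HT.
  apply Rabs_lt_between' in HT.
  pose proof (Hbound t ltac:(lra)). pose proof (Hg t ltac:(lra)). pose proof (cond_pos eps).
  rewrite Rminus_0_r, Rabs_right by lra. nra.
Qed.

Lemma cubic_lyapunov_stable_attractive (g : R -> R) (m M be K : R) :
  0 < m -> 0 < M -> 0 < be -> 0 < K ->
  (forall t, 0 <= t -> 0 <= g t) ->
  cubic_lyapunov g m M be K ->
  (forall eps, 0 < eps -> g 0 < Rmin (be / (2 * K)) eps * sqrt (m / M) ->
     forall t, 0 <= t -> g t < eps) /\
  (g 0 < be / (2 * K) * sqrt (m / M) -> is_lim g p_infty 0).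
Proof.
  intros Hm HM Hbe HK Hg Hlyap.
  assert (Hr : 0 < be / (2 * K)) by (apply Rdiv_lt_0_compat; lra).
  assert (Hk : 0 < be / (2 * M)) by (apply Rdiv_lt_0_compat; lra).
  split.
  - intros eps Heps Hg0 t Ht.
    set (c := Rmin (be / (2 * K)) eps) in *.
    assert (Hc : 0 < c) by (apply Rmin_glb_lt; lra).
    pose proof (sq_exp_decay_of_cubic_lyapunov g m M be K Hm HM Hbe HK Hg Hlyap c
                  (conj Hc (Rmin_l _ _)) Hg0 t Ht) as Hdecay.
    pose proof (exp_neg_le_1 (be / (2 * M)) t ltac:(lra) Ht).
    assert (c <= eps) by apply Rmin_r.
    pose proof (Hg t Ht). nra.
  - intros Hg0.
    apply (is_lim_zero_of_sq_exp_bound g ((be / (2 * K)) ^ 2) (be / (2 * M)) Hk Hg).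
    intros t Ht. left.
    exact (sq_exp_decay_of_cubic_lyapunov g m M be K Hm HM Hbe HK Hg Hlyap _
             (conj Hr (Rle_refl _)) Hg0 t Ht).
Qed.

Definition sqnorm (z : state) : R :=
  let '(a, b, c, d) := z in a ^ 2 + b ^ 2 + c ^ 2 + d ^ 2.

Lemma sqnorm_nonneg (z : state) : 0 <= sqnorm z.
Proof.
  destruct z as [[[a b] c] d]; cbv beta iota delta [sqnorm].
  pose proof (pow2_ge_0 a); pose proof (pow2_ge_0 b);
  pose proof (pow2_ge_0 c); pose proof (pow2_ge_0 d); lra.
Qed.

Lemma sqnorm_fst_pos (a b c d : R) : a <> 0 -> 0 < sqnorm (a, b, c, d).
Proof.
  intros Ha. cbv beta iota delta [sqnorm].
  pose proof (pow2_ge_0 b); pose proof (pow2_ge_0 c); pose proof (pow2_ge_0 d).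
  assert (0 < a ^ 2) by (apply pow2_gt_0; exact Ha). lra.
Qed.

Lemma dist4_nonneg (u v : state) : 0 <= dist4 u v.
Proof. destruct u as [[[? ?] ?] ?], v as [[[? ?] ?] ?]; apply sqrt_pos. Qed.

Definition dot4 (r w : state) : R :=
  let '(a, b, c, d) := r in let '(u, v, x, y) := w in a * u + b * v + c * x + d * y.

Lemma dot4_sq_le (r w : state) : dot4 r w ^ 2 <= sqnorm r * sqnorm w.
Proof.
  destruct r as [[[a b] c] d], w as [[[u v] x] y]; cbv beta iota delta [dot4 sqnorm].
  pose proof (pow2_ge_0 (a * v - b * u)); pose proof (pow2_ge_0 (a * x - c * u));
  pose proof (pow2_ge_0 (a * y - d * u)); pose proof (pow2_ge_0 (b * x - c * v));
  pose proof (pow2_ge_0 (b * y - d * v)); pose proof (pow2_ge_0 (c * y - d * x)).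
  nra.
Qed.

Definition linmap4 (r1 r2 r3 r4 w : state) : state := (dot4 r1 w, dot4 r2 w, dot4 r3 w, dot4 r4 w).

Lemma sqnorm_linmap4_le (r1 r2 r3 r4 w : state) :
  sqnorm (linmap4 r1 r2 r3 r4 w) <= (sqnorm r1 + sqnorm r2 + sqnorm r3 + sqnorm r4) * sqnorm w.
Proof.
  change (sqnorm (linmap4 r1 r2 r3 r4 w))
    with (dot4 r1 w ^ 2 + dot4 r2 w ^ 2 + dot4 r3 w ^ 2 + dot4 r4 w ^ 2).
  pose proof (dot4_sq_le r1 w); pose proof (dot4_sq_le r2 w);
  pose proof (dot4_sq_le r3 w); pose proof (dot4_sq_le r4 w).
  lra.
Qed.

Definition has_derivative4 (Sf Ef If Rf : R -> R) (t : R) (du : state) : Prop :=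
  let '(dS, dE, dI, dR) := du in
  is_derive Sf t dS /\ is_derive Ef t dE /\ is_derive If t dI /\ is_derive Rf t dR.

Lemma young_cross (c d U x w : R) :
  0 < d -> c ^ 2 <= 2 * d * U -> c * x * w <= d / 2 * w ^ 2 + U * x ^ 2.
Proof.
  intros Hd Hc.
  assert (2 * d * (d / 2 * w ^ 2 + U * x ^ 2 - c * x * w)
          = (d * w - c * x) ^ 2 + (2 * d * U - c ^ 2) * x ^ 2) by (field; lra).
  pose proof (pow2_ge_0 (d * w - c * x)); pose proof (pow2_ge_0 x).
  nra.
Qed.

Lemma Rabs_le_sqrt (a S : R) : a ^ 2 <= S -> Rabs a <= sqrt S.
Proof.
  intros Ha. rewrite <- (sqrt_pow2 (Rabs a)) by apply Rabs_pos.
  apply sqrt_le_1_alt. rewrite pow2_abs. exact Ha.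
Qed.

Lemma sqrt_le_sqrt_mult (x y C : R) :
  0 <= C -> 0 <= y -> x <= C * y -> sqrt x <= sqrt C * sqrt y.
Proof.
  intros HC Hy Hx. rewrite <- sqrt_mult by assumption. now apply sqrt_le_1_alt.
Qed.

Lemma four_mul_le_sq_add (a b : R) : 4 * a * b <= (a + b) ^ 2.
Proof. pose proof (pow2_ge_0 (a - b)); nra. Qed.

Section ReducedSystem.

Variables mu p m1 m2 tau kap : R.
Hypotheses (hmu : 0 < mu) (hp : 0 < p) (hm1 : 0 < m1) (hm2 : 0 < m2)
  (htau : 0 <= tau) (hkap : 0 < kap).

Definition reduced_field (z : state) : state :=
  let '(x, y, q, t) := z in
  let v := q + tau / kap * t in
  (- (mu + p) * x - p * q - p * x * v,
   m1 * x - (m1 + m2) * y + m1 * x * v,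
   m2 * y - tau * (q - t),
   kap * (q - t)).

Definition ecoef : R := p / (4 * (m1 + m2) + 8 * (mu + p)).

Definition Bcoef : R := p * tau * (m1 + m2 + tau + kap) / (m1 * m2) + ecoef * p.

Definition lyap (z : state) : R :=
  let '(x, y, q, t) := z in
  let e := ecoef in let c := p / m1 in let M := m1 + m2 in
  x ^ 2 / 2 + e * x * q + c * m2 / M * y ^ 2 + c * y * q
  + c / (2 * m2) * (M * q ^ 2 + tau * (q - t) ^ 2 + tau * M / kap * t ^ 2)
  + e * p / kap * t ^ 2.

Definition lyap_diff (z dz : state) : R :=
  let '(x, y, q, t) := z in
  let '(dx, dy, dq, dt) := dz in
  let e := ecoef in let c := p / m1 in let M := m1 + m2 in
  (x + e * q) * dx + (2 * c * m2 / M * y + c * q) * dy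
  + (e * x + c * y + c / m2 * (M * q + tau * (q - t))) * dq
  + (c / m2 * (tau * M / kap * t - tau * (q - t)) + 2 * e * p / kap * t) * dt.

Definition lyap_dot_quad (z : state) : R :=
  let '(x, y, q, t) := z in
  let e := ecoef in
  - (mu + p) * x ^ 2 + (2 * p * m2 / (m1 + m2) + e * m2) * x * y - p * m2 / m1 * y ^ 2
  - e * (mu + p + tau) * x * (q - t) - e * (mu + p) * x * t
  - Bcoef * (q - t) ^ 2 - e * p * t ^ 2.

Definition lyap_dot_cubic (z : state) : R :=
  let '(x, y, q, t) := z in
  p * x * (q + tau / kap * t) * (- x + (1 - ecoef) * q + 2 * m2 / (m1 + m2) * y).

Lemma lyap_diff_reduced_field (z : state) :
  lyap_diff z (reduced_field z) = lyap_dot_quad z + lyap_dot_cubic z.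
Proof.
  destruct z as [[[x y] q] t].
  unfold lyap_diff, reduced_field, lyap_dot_quad, lyap_dot_cubic, Bcoef, ecoef.
  field; lra.
Qed.

Lemma ecoef_bounds :
  0 < ecoef /\ ecoef * (4 * (m1 + m2)) <= p /\ ecoef * (8 * (mu + p)) <= p.
Proof.
  unfold ecoef.
  assert (HD : 0 < 4 * (m1 + m2) + 8 * (mu + p)) by lra.
  assert (Hpe : p / (4 * (m1 + m2) + 8 * (mu + p)) * (4 * (m1 + m2) + 8 * (mu + p)) = p)
    by (field; lra).
  assert (0 < p / (4 * (m1 + m2) + 8 * (mu + p))) by (apply Rdiv_lt_0_compat; lra).
  repeat split; nra.
Qed.

Lemma Bcoef_tau_part_nonneg : 0 <= p * tau * (m1 + m2 + tau + kap) / (m1 * m2).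
Proof.
  apply Rle_mult_inv_pos; [apply Rmult_le_pos; [apply Rmult_le_pos |] | apply Rmult_lt_0_compat];
    lra.
Qed.

Lemma Bcoef_ge : ecoef * p <= Bcoef.
Proof. unfold Bcoef; pose proof Bcoef_tau_part_nonneg; lra. Qed.

Lemma cross_xy_dominated :
  (2 * p * m2 / (m1 + m2) + ecoef * m2) ^ 2 <= 2 * (p * m2 / m1) * (81 * p / 128).
Proof.
  destruct ecoef_bounds as [He [HeM _]].
  set (e := ecoef) in *; set (M := m1 + m2) in *.
  assert (HM : 0 < M) by (unfold M; lra).
  pose proof (four_mul_le_sq_add m1 m2) as HMM; fold M in HMM.
  assert (Hc : (2 * p * m2 / M + e * m2) * M = m2 * (2 * p + e * M)) by (field; lra).
  assert (Hc0 : 0 <= (2 * p * m2 / M + e * m2) * M) by (rewrite Hc; apply Rmult_le_pos; nra).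
  assert (HcM : (2 * p * m2 / M + e * m2) * M <= m2 * (9 * p / 4))
    by (rewrite Hc; apply Rmult_le_compat_l; lra).
  apply Rmult_le_reg_r with (64 * m1 * M ^ 2).
  { apply Rmult_lt_0_compat; [lra | apply pow_lt; lra]. }
  replace ((2 * p * m2 / M + e * m2) ^ 2 * (64 * m1 * M ^ 2))
    with (64 * m1 * ((2 * p * m2 / M + e * m2) * M) ^ 2) by ring.
  replace (2 * (p * m2 / m1) * (81 * p / 128) * (64 * m1 * M ^ 2))
    with (81 * p ^ 2 * m2 * M ^ 2) by (field; lra).
  apply Rle_trans with (64 * m1 * (m2 * (9 * p / 4)) ^ 2).
  - apply Rmult_le_compat_l; [lra |]. apply pow_incr; lra.
  - replace (64 * m1 * (m2 * (9 * p / 4)) ^ 2) with (81 * p ^ 2 * m2 * (4 * m1 * m2)) by field.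
    apply Rmult_le_compat_l; [pose proof (pow2_ge_0 p); nra | exact HMM].
Qed.

Lemma cross_xq_dominated :
  (ecoef * (mu + p + tau)) ^ 2 <= 2 * Bcoef * ((mu + p) / 8 + p / 64).
Proof.
  destruct ecoef_bounds as [He [HeM Hemu]].
  pose proof (four_mul_le_sq_add m1 m2) as HMM.
  unfold Bcoef; set (e := ecoef) in *; set (M := m1 + m2) in *.
  assert (HM : 0 < M) by (unfold M; lra).
  pose proof Bcoef_tau_part_nonneg as HG; fold M in HG.
  set (G := p * tau * (M + tau + kap) / (m1 * m2)) in *.
  assert (Hsplit : (e * (mu + p + tau)) ^ 2 <= 2 * (e * (mu + p)) ^ 2 + 2 * (e * tau) ^ 2).
  { pose proof (pow2_ge_0 (e * (mu + p) - e * tau)); nra. }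
  assert (Hmu : 2 * (e * (mu + p)) ^ 2 <= 2 * (e * p) * ((mu + p) / 8)).
  { assert (0 <= e * (mu + p)) by nra. nra. }
  assert (He2 : 64 * e ^ 2 * (m1 * m2) <= p ^ 2).
  { assert ((e * (4 * M)) ^ 2 <= p ^ 2) by (apply pow_incr; nra). nra. }
  assert (Htau : 2 * (e * tau) ^ 2 <= 2 * G * (p / 64)).
  { unfold G.
    replace (2 * (p * tau * (M + tau + kap) / (m1 * m2)) * (p / 64))
      with (p ^ 2 / (32 * (m1 * m2)) * (tau * (M + tau + kap))) by (field; lra).
    apply Rle_trans with (2 * e ^ 2 * (tau * (M + tau + kap))).
    - replace (2 * (e * tau) ^ 2) with (2 * e ^ 2 * (tau * tau)) by ring.
      apply Rmult_le_compat_l; nra.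
    - apply Rmult_le_compat_r; [nra |].
      apply Rmult_le_reg_r with (32 * (m1 * m2)); [nra |].
      replace (p ^ 2 / (32 * (m1 * m2)) * (32 * (m1 * m2))) with (p ^ 2) by (field; lra).
      nra. }
  assert (0 <= 2 * G * ((mu + p) / 8)) by nra.
  assert (0 <= 2 * (e * p) * (p / 64)) by nra.
  nra.
Qed.

Lemma cross_xt_dominated :
  (ecoef * (mu + p)) ^ 2 <= 2 * (ecoef * p) * ((mu + p) / 16).
Proof.
  destruct ecoef_bounds as [He [_ Hemu]].
  assert (0 <= ecoef * (mu + p)) by nra. nra.
Qed.

Lemma lyap_dot_quad_le_diag (z : state) :
  let '(x, y, q, t) := z in
  lyap_dot_quad z <=
  - ((mu + p) / 8) * x ^ 2 - p * m2 / (2 * m1) * y ^ 2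
  - Bcoef / 2 * (q - t) ^ 2 - ecoef * p / 2 * t ^ 2.
Proof.
  destruct z as [[[x y] q] t].
  destruct ecoef_bounds as [He _].
  pose proof Bcoef_ge as HB.
  assert (Hd1 : 0 < p * m2 / m1) by (apply Rdiv_lt_0_compat; nra).
  pose proof (young_cross _ _ _ x y Hd1 cross_xy_dominated) as Cxy.
  pose proof (young_cross _ Bcoef _ x (- (q - t)) ltac:(nra) cross_xq_dominated) as Cxq.
  pose proof (young_cross _ (ecoef * p) _ x (- t) ltac:(nra) cross_xt_dominated) as Cxt.
  unfold lyap_dot_quad.
  replace (p * m2 / (2 * m1)) with (p * m2 / m1 / 2) by (field; lra).
  pose proof (pow2_ge_0 x).
  nra.
Qed.

Lemma lyap_dot_quad_neg_definite :
  exists be, 0 < be /\ forall z, lyap_dot_quad z <= - be * sqnorm z.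
Proof.
  destruct ecoef_bounds as [He _].
  exists (Rmin (Rmin ((mu + p) / 8) (p * m2 / (2 * m1))) (ecoef * p / 8)).
  split.
  { repeat apply Rmin_glb_lt; [lra | apply Rdiv_lt_0_compat; nra | nra]. }
  intros [[[x y] q] t].
  pose proof (lyap_dot_quad_le_diag (x, y, q, t)) as HD; cbv beta iota in HD.
  pose proof Bcoef_ge as HB.
  set (b := Rmin (Rmin ((mu + p) / 8) (p * m2 / (2 * m1))) (ecoef * p / 8)).
  assert (Hb1 : b <= (mu + p) / 8) by (unfold b; eapply Rle_trans; apply Rmin_l).
  assert (Hb2 : b <= p * m2 / (2 * m1))
    by (unfold b; eapply Rle_trans; [apply Rmin_l | apply Rmin_r]).
  assert (Hb3 : b <= ecoef * p / 8) by (unfold b; apply Rmin_r).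
  assert (Hqt : q ^ 2 + t ^ 2 <= 4 * ((q - t) ^ 2 + t ^ 2)).
  { pose proof (pow2_ge_0 (q - 2 * t)); nra. }
  pose proof (pow2_ge_0 x); pose proof (pow2_ge_0 y); pose proof (pow2_ge_0 (q - t)).
  assert (b * x ^ 2 <= (mu + p) / 8 * x ^ 2) by (apply Rmult_le_compat_r; lra).
  assert (b * y ^ 2 <= p * m2 / (2 * m1) * y ^ 2) by (apply Rmult_le_compat_r; lra).
  assert (b * (q ^ 2 + t ^ 2) <= ecoef * p / 2 * ((q - t) ^ 2 + t ^ 2)).
  { pose proof (pow2_ge_0 q); pose proof (pow2_ge_0 t).
    apply Rle_trans with (ecoef * p / 8 * (q ^ 2 + t ^ 2)); [apply Rmult_le_compat_r; lra |].
    assert (0 <= ecoef * p / 8) by nra. nra. }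
  assert (Bcoef / 2 * (q - t) ^ 2 >= ecoef * p / 2 * (q - t) ^ 2) by nra.
  cbv beta iota delta [sqnorm]. nra.
Qed.

Lemma lyap_dot_cubic_le (z : state) :
  lyap_dot_cubic z <= 4 * p * (1 + tau / kap) * sqrt (sqnorm z) ^ 3.
Proof.
  destruct ecoef_bounds as [He [_ Hemu]].
  destruct z as [[[x y] q] t]; unfold lyap_dot_cubic.
  set (n := sqrt (sqnorm (x, y, q, t))).
  assert (Hn : 0 <= n) by apply sqrt_pos.
  pose proof (pow2_ge_0 x); pose proof (pow2_ge_0 y);
  pose proof (pow2_ge_0 q); pose proof (pow2_ge_0 t).
  assert (Ax : Rabs x <= n) by (apply Rabs_le_sqrt; simpl sqnorm; lra).
  assert (Ay : Rabs y <= n) by (apply Rabs_le_sqrt; simpl sqnorm; lra).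
  assert (Aq : Rabs q <= n) by (apply Rabs_le_sqrt; simpl sqnorm; lra).
  assert (At : Rabs t <= n) by (apply Rabs_le_sqrt; simpl sqnorm; lra).
  assert (Hr : 0 <= tau / kap) by (apply Rle_mult_inv_pos; lra).
  assert (Hv : Rabs (q + tau / kap * t) <= (1 + tau / kap) * n).
  { eapply Rle_trans; [apply Rabs_triang |].
    rewrite Rabs_mult, (Rabs_right (tau / kap)) by lra. nra. }
  assert (He1 : 0 <= 1 - ecoef <= 1) by nra.
  assert (Hm : 0 < 2 * m2 / (m1 + m2) <= 2).
  { split; [apply Rdiv_lt_0_compat; lra |].
    apply Rmult_le_reg_r with (m1 + m2); [lra |].
    replace (2 * m2 / (m1 + m2) * (m1 + m2)) with (2 * m2) by (field; lra). lra. }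
  assert (Hw : Rabs (- x + (1 - ecoef) * q + 2 * m2 / (m1 + m2) * y) <= 4 * n).
  { eapply Rle_trans; [apply Rabs_triang |].
    eapply Rle_trans; [apply Rplus_le_compat_r, Rabs_triang |].
    rewrite Rabs_Ropp, !Rabs_mult, (Rabs_right (1 - ecoef)), (Rabs_right (2 * m2 / (m1 + m2)))
      by lra.
    pose proof (Rabs_pos q); pose proof (Rabs_pos y). nra. }
  eapply Rle_trans; [apply Rle_abs |].
  rewrite !Rabs_mult, (Rabs_right p) by lra.
  pose proof (Rabs_pos x); pose proof (Rabs_pos (q + tau / kap * t));
  pose proof (Rabs_pos (- x + (1 - ecoef) * q + 2 * m2 / (m1 + m2) * y)).
  apply Rle_trans with (p * n * ((1 + tau / kap) * n) * (4 * n)); [| right; ring].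
  apply Rmult_le_compat; [repeat apply Rmult_le_pos; lra | lra | | exact Hw].
  apply Rmult_le_compat; [apply Rmult_le_pos; lra | lra | | exact Hv].
  apply Rmult_le_compat_l; lra.
Qed.

Lemma ecoef_sq_le : ecoef ^ 2 <= p / m1 * (m1 + m2) / (12 * m2).
Proof.
  destruct ecoef_bounds as [He [HeM Hemu]].
  pose proof (four_mul_le_sq_add m1 m2) as HMM.
  set (e := ecoef) in *; set (M := m1 + m2) in *.
  assert (HM : 0 < M) by (unfold M; lra).
  replace (p / m1 * M / (12 * m2)) with (p * M / (12 * (m1 * m2))) by (field; lra).
  apply Rmult_le_reg_r with (12 * (m1 * m2)); [nra |].
  replace (p * M / (12 * (m1 * m2)) * (12 * (m1 * m2))) with (p * M) by (field; lra).
  assert (e * (e * M) <= (1 / 8) * (p / 4)) by (apply Rmult_le_compat; nra).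
  nra.
Qed.

Lemma lyap_ge_diag (z : state) :
  let '(x, y, q, t) := z in
  let c := p / m1 in let M := m1 + m2 in
  1 / 4 * x ^ 2 + c * m2 / (4 * M) * y ^ 2 + c * M / (12 * m2) * q ^ 2
  + ecoef * p / kap * t ^ 2 <= lyap z.
Proof.
  destruct ecoef_bounds as [He _].
  pose proof ecoef_sq_le as Hee.
  destruct z as [[[x y] q] t]; cbv zeta.
  set (e := ecoef) in *; set (c := p / m1) in *; set (M := m1 + m2) in *.
  assert (HM : 0 < M) by (unfold M; lra).
  assert (Hc : 0 < c) by (apply Rdiv_lt_0_compat; lra).
  assert (Hid : lyap (x, y, q, t) =
     1 / 4 * x ^ 2 + c * m2 / (4 * M) * y ^ 2 + c * M / (12 * m2) * q ^ 2 + e * p / kap * t ^ 2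
     + 1 / 4 * (x + 2 * e * q) ^ 2 + c * M / (3 * m2) * (q + 3 * m2 / (2 * M) * y) ^ 2
     + (c * M / (12 * m2) - e ^ 2) * q ^ 2 + c * tau / (2 * m2) * (q - t) ^ 2
     + c * tau * M / (2 * m2 * kap) * t ^ 2).
  { unfold lyap; fold e c M. field; lra. }
  rewrite Hid.
  assert (0 <= c * M / (3 * m2) * (q + 3 * m2 / (2 * M) * y) ^ 2).
  { apply Rmult_le_pos; [apply Rlt_le, Rdiv_lt_0_compat; nra | apply pow2_ge_0]. }
  assert (0 <= c * tau / (2 * m2) * (q - t) ^ 2).
  { apply Rmult_le_pos; [apply Rle_mult_inv_pos; nra | apply pow2_ge_0]. }
  assert (0 <= c * tau * M / (2 * m2 * kap) * t ^ 2).
  { apply Rmult_le_pos; [apply Rle_mult_inv_pos | apply pow2_ge_0];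
      [apply Rmult_le_pos; [apply Rmult_le_pos |] | apply Rmult_lt_0_compat]; lra. }
  pose proof (pow2_ge_0 (x + 2 * e * q)).
  assert (0 <= (c * M / (12 * m2) - e ^ 2) * q ^ 2)
    by (apply Rmult_le_pos; [lra | apply pow2_ge_0]).
  lra.
Qed.

Lemma lyap_pos_definite : exists m, 0 < m /\ forall z, m * sqnorm z <= lyap z.
Proof.
  destruct ecoef_bounds as [He _].
  set (c := p / m1); set (M := m1 + m2).
  assert (HM : 0 < M) by (unfold M; lra).
  assert (Hc : 0 < c) by (apply Rdiv_lt_0_compat; lra).
  set (m := Rmin (Rmin (1 / 4) (c * m2 / (4 * M))) (Rmin (c * M / (12 * m2)) (ecoef * p / kap))).
  exists m; split.
  { repeat apply Rmin_glb_lt; try lra; apply Rdiv_lt_0_compat; nra. }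
  intros [[[x y] q] t].
  pose proof (lyap_ge_diag (x, y, q, t)) as Hdiag; cbv beta iota zeta in Hdiag; fold c M in Hdiag.
  assert (Hm1 : m <= 1 / 4) by (unfold m; eapply Rle_trans; apply Rmin_l).
  assert (Hm2 : m <= c * m2 / (4 * M))
    by (unfold m; eapply Rle_trans; [apply Rmin_l | apply Rmin_r]).
  assert (Hm3 : m <= c * M / (12 * m2))
    by (unfold m; eapply Rle_trans; [apply Rmin_r | apply Rmin_l]).
  assert (Hm4 : m <= ecoef * p / kap) by (unfold m; eapply Rle_trans; apply Rmin_r).
  cbv beta iota delta [sqnorm].
  assert (m * x ^ 2 <= 1 / 4 * x ^ 2) by (apply Rmult_le_compat_r; [apply pow2_ge_0 | lra]).
  assert (m * y ^ 2 <= c * m2 / (4 * M) * y ^ 2)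
    by (apply Rmult_le_compat_r; [apply pow2_ge_0 | lra]).
  assert (m * q ^ 2 <= c * M / (12 * m2) * q ^ 2)
    by (apply Rmult_le_compat_r; [apply pow2_ge_0 | lra]).
  assert (m * t ^ 2 <= ecoef * p / kap * t ^ 2)
    by (apply Rmult_le_compat_r; [apply pow2_ge_0 | lra]).
  lra.
Qed.

Lemma lyap_bounded : exists M', 0 < M' /\ forall z, lyap z <= M' * sqnorm z.
Proof.
  destruct ecoef_bounds as [He _].
  set (e := ecoef) in *; set (c := p / m1); set (M := m1 + m2).
  assert (HM : 0 < M) by (unfold M; lra).
  assert (Hc : 0 < c) by (apply Rdiv_lt_0_compat; lra).
  assert (Hc2 : 0 < c / (2 * m2)) by (apply Rdiv_lt_0_compat; lra).
  assert (Ha : 0 < c * m2 / M) by (apply Rdiv_lt_0_compat; nra).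
  assert (HtM : 0 <= tau * M / kap) by (apply Rle_mult_inv_pos; nra).
  assert (Hep : 0 < e * p / kap) by (apply Rdiv_lt_0_compat; nra).
  exists (1 / 2 + e + c * m2 / M + c + c / (2 * m2) * (M + 2 * tau + tau * M / kap) + e * p / kap).
  split; [nra |].
  intros [[[x y] q] t]; unfold lyap; fold e c M; cbv beta iota delta [sqnorm].
  set (S := x ^ 2 + y ^ 2 + q ^ 2 + t ^ 2).
  pose proof (pow2_ge_0 x); pose proof (pow2_ge_0 y);
  pose proof (pow2_ge_0 q); pose proof (pow2_ge_0 t).
  pose proof (pow2_ge_0 (x - q)); pose proof (pow2_ge_0 (y - q)); pose proof (pow2_ge_0 (q + t)).
  assert (e * x * q <= e * S) by (unfold S; nra).
  assert (c * m2 / M * y ^ 2 <= c * m2 / M * S) by (apply Rmult_le_compat_l; unfold S; lra).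
  assert (c * y * q <= c * S) by (unfold S; nra).
  assert (M * q ^ 2 + tau * (q - t) ^ 2 + tau * M / kap * t ^ 2
          <= (M + 2 * tau + tau * M / kap) * S).
  { assert (M * q ^ 2 <= M * S) by (apply Rmult_le_compat_l; unfold S; lra).
    assert (tau * (q - t) ^ 2 <= 2 * tau * S) by (unfold S; nra).
    assert (tau * M / kap * t ^ 2 <= tau * M / kap * S) by (apply Rmult_le_compat_l; unfold S; lra).
    lra. }
  assert (c / (2 * m2) * (M * q ^ 2 + tau * (q - t) ^ 2 + tau * M / kap * t ^ 2)
          <= c / (2 * m2) * (M + 2 * tau + tau * M / kap) * S).
  { rewrite Rmult_assoc. apply Rmult_le_compat_l; lra. }
  assert (e * p / kap * t ^ 2 <= e * p / kap * S) by (apply Rmult_le_compat_l; unfold S; lra).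
  assert (x ^ 2 / 2 <= 1 / 2 * S) by (unfold S; lra).
  nra.
Qed.

Lemma lyap_dot_reduced_le :
  exists be K, 0 < be /\ 0 < K /\ forall z,
    lyap_diff z (reduced_field z) <= - be * sqnorm z + K * sqrt (sqnorm z) ^ 3.
Proof.
  destruct lyap_dot_quad_neg_definite as [be [Hbe Hquad]].
  exists be, (4 * p * (1 + tau / kap)); split; [exact Hbe | split].
  - assert (0 <= tau / kap) by (apply Rle_mult_inv_pos; lra).
    nra.
  - intros z. rewrite lyap_diff_reduced_field.
    pose proof (Hquad z); pose proof (lyap_dot_cubic_le z); lra.
Qed.

End ReducedSystem.

Section SEIR.

Variables Lam mu beta alpha gamma sigma xi Dl Ss Es Is Rs : R.
Hypotheses (hmu : 0 < mu) (halpha : 0 < alpha) (hgamma : 0 < gamma) (hxi : 0 <= xi)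
  (hDl : 0 <= Dl) (hbeta : 0 < beta) (hsigma : sigma < 1) (hE : 0 < Es) (hI : 0 < Is)
  (heq : is_equilibrium (seir_field Lam mu beta alpha gamma sigma xi Dl) (Ss, Es, Is, Rs)).

Lemma equilibrium_equations :
  Lam - mu * Ss - beta * (1 - sigma) * Ss * Is + xi * Rs = 0 /\
  beta * (1 - sigma) * Ss * Is - (mu + alpha) * Es = 0 /\
  alpha * Es - (mu + gamma) * Is - Dl * Is = 0 /\
  gamma * Is - mu * Rs - xi * Rs = 0.
Proof. now injection heq. Qed.

Lemma transmission_pos : 0 < beta * (1 - sigma).
Proof. apply Rmult_lt_0_compat; lra. Qed.

Lemma equilibrium_S_pos : 0 < Ss.
Proof.
  destruct equilibrium_equations as [_ [HE _]].
  pose proof transmission_pos.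
  assert (0 < beta * (1 - sigma) * Is * Ss) by nra.
  apply Rmult_lt_reg_l with (beta * (1 - sigma) * Is); nra.
Qed.

Lemma equilibrium_S_value :
  beta * (1 - sigma) * Ss * alpha = (mu + alpha) * (mu + gamma + Dl).
Proof.
  destruct equilibrium_equations as [_ [HE [HI _]]].
  apply Rmult_eq_reg_r with Is; [| lra]. nra.
Qed.

Definition seir_p : R := beta * (1 - sigma) * Is.

Definition seir_tau : R := xi * gamma / (beta * (1 - sigma) * Ss).

Definition seir_kappa : R := mu + xi - seir_tau.

Lemma seir_p_pos : 0 < seir_p.
Proof. unfold seir_p; pose proof transmission_pos; nra. Qed.

Lemma seir_tau_bounds : 0 <= seir_tau <= xi.
Proof.
  pose proof transmission_pos; pose proof equilibrium_S_pos.
  pose proof equilibrium_S_value as Hth.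
  assert (Hb : 0 < beta * (1 - sigma) * Ss) by nra.
  unfold seir_tau; split.
  - apply Rle_mult_inv_pos; nra.
  - apply Rmult_le_reg_r with (beta * (1 - sigma) * Ss * alpha); [nra |].
    replace (xi * gamma / (beta * (1 - sigma) * Ss) * (beta * (1 - sigma) * Ss * alpha))
      with (xi * (gamma * alpha)) by (field; lra).
    rewrite Hth. apply Rmult_le_compat_l; nra.
Qed.

Lemma seir_kappa_pos : 0 < seir_kappa.
Proof. unfold seir_kappa; pose proof seir_tau_bounds; lra. Qed.

Definition zcoord (w : state) : state :=
  let '(ws, we, wi, wr) := w in
  (ws / Ss, we / Es - wi / Is,
   wi / Is - seir_tau / gamma * (wr / Is), seir_kappa / gamma * (wr / Is)).

Definition seir_reduced_field : state -> state :=
  reduced_field mu seir_p (mu + alpha) (mu + gamma + Dl) seir_tau seir_kappa.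

Lemma zcoord_seir_field (S E I R : R) :
  zcoord (seir_field Lam mu beta alpha gamma sigma xi Dl (S, E, I, R))
  = seir_reduced_field (zcoord (S - Ss, E - Es, I - Is, R - Rs)).
Proof.
  destruct equilibrium_equations as [H1 [H2 [H3 H4]]].
  pose proof equilibrium_S_pos as HS; pose proof equilibrium_S_value as Hth.
  pose proof transmission_pos as Hb.
  unfold seir_reduced_field, zcoord, reduced_field, seir_field, seir_p, seir_kappa, seir_tau.
  set (b := beta * (1 - sigma)) in *; clearbody b.
  assert (HLam : Lam = mu * Ss + b * Ss * Is - xi * Rs) by lra.
  assert (HEs : Es = (mu + gamma + Dl) * Is / alpha).
  { apply Rmult_eq_reg_l with alpha; [| lra].
    replace (alpha * ((mu + gamma + Dl) * Is / alpha)) with ((mu + gamma + Dl) * Is)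
      by (field; lra).
    lra. }
  assert (HRs : Rs = gamma * Is / (mu + xi)).
  { apply Rmult_eq_reg_l with (mu + xi); [| lra].
    replace ((mu + xi) * (gamma * Is / (mu + xi))) with (gamma * Is) by (field; lra).
    lra. }
  assert (Hbb : b = (mu + alpha) * (mu + gamma + Dl) / (alpha * Ss)).
  { apply Rmult_eq_reg_l with (alpha * Ss); [| nra].
    replace (alpha * Ss * ((mu + alpha) * (mu + gamma + Dl) / (alpha * Ss)))
      with ((mu + alpha) * (mu + gamma + Dl)) by (field; lra).
    lra. }
  assert (Hgap : 0 < (mu + alpha) * (mu + gamma + Dl) - alpha * gamma) by nra.
  subst Lam Es Rs b.
  f_equal; [f_equal; [f_equal |] |]; field; repeat split; try lra.
  all: apply Rgt_not_eq; assert (0 < (mu + alpha) * (mu + gamma + Dl)) by nra; nra.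
Qed.

Lemma zcoord_linmap4 (w : state) :
  zcoord w = linmap4 (/ Ss, 0, 0, 0) (0, / Es, - / Is, 0)
               (0, 0, / Is, - (seir_tau / (gamma * Is))) (0, 0, 0, seir_kappa / (gamma * Is)) w.
Proof.
  pose proof equilibrium_S_pos.
  destruct w as [[[ws we] wi] wr]; unfold zcoord, linmap4, dot4.
  f_equal; [f_equal; [f_equal |] |]; field; lra.
Qed.

Lemma linmap4_zcoord (w : state) :
  w = linmap4 (Ss, 0, 0, 0) (0, Es, Es, Es * (seir_tau / seir_kappa))
        (0, 0, Is, Is * (seir_tau / seir_kappa)) (0, 0, 0, gamma * Is / seir_kappa) (zcoord w).
Proof.
  pose proof equilibrium_S_pos; pose proof seir_kappa_pos.
  destruct w as [[[ws we] wi] wr]; unfold zcoord, linmap4, dot4.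
  f_equal; [f_equal; [f_equal |] |]; field; lra.
Qed.

Lemma zcoord_bounded : exists C, 0 < C /\ forall w, sqnorm (zcoord w) <= C * sqnorm w.
Proof.
  pose proof equilibrium_S_pos.
  eexists; split; [| intros w; rewrite zcoord_linmap4; apply sqnorm_linmap4_le].
  pose proof (sqnorm_fst_pos (/ Ss) 0 0 0 ltac:(apply Rinv_neq_0_compat; lra)).
  pose proof (sqnorm_nonneg (0, / Es, - / Is, 0));
  pose proof (sqnorm_nonneg (0, 0, / Is, - (seir_tau / (gamma * Is))));
  pose proof (sqnorm_nonneg (0, 0, 0, seir_kappa / (gamma * Is))).
  lra.
Qed.

Lemma zcoord_coercive : exists C, 0 < C /\ forall w, sqnorm w <= C * sqnorm (zcoord w).
Proof.
  pose proof equilibrium_S_pos.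
  eexists; split; [| intros w; rewrite (linmap4_zcoord w) at 1; apply sqnorm_linmap4_le].
  pose proof (sqnorm_fst_pos Ss 0 0 0 ltac:(lra)).
  pose proof (sqnorm_nonneg (0, Es, Es, Es * (seir_tau / seir_kappa)));
  pose proof (sqnorm_nonneg (0, 0, Is, Is * (seir_tau / seir_kappa)));
  pose proof (sqnorm_nonneg (0, 0, 0, gamma * Is / seir_kappa)).
  lra.
Qed.

Definition seir_lyap (w : state) : R :=
  lyap mu seir_p (mu + alpha) (mu + gamma + Dl) seir_tau seir_kappa (zcoord w).

Lemma is_derive_seir_lyap (Sf Ef If Rf : R -> R) (t : R) (du : state) :
  has_derivative4 Sf Ef If Rf t du ->
  is_derive (fun s => seir_lyap (Sf s - Ss, Ef s - Es, If s - Is, Rf s - Rs)) t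
    (lyap_diff mu seir_p (mu + alpha) (mu + gamma + Dl) seir_tau seir_kappa
       (zcoord (Sf t - Ss, Ef t - Es, If t - Is, Rf t - Rs)) (zcoord du)).
Proof.
  destruct du as [[[dS dE] dI] dR]; intros [HdS [HdE [HdI HdR]]].
  pose proof equilibrium_S_pos; pose proof seir_kappa_pos.
  unfold seir_lyap, lyap, lyap_diff, zcoord. auto_derive.
  - repeat split; eexists; eassumption.
  - replace (Derive (fun s => Sf s) t) with dS by (symmetry; now apply is_derive_unique).
    replace (Derive (fun s => Ef s) t) with dE by (symmetry; now apply is_derive_unique).
    replace (Derive (fun s => If s) t) with dI by (symmetry; now apply is_derive_unique).
    replace (Derive (fun s => Rf s) t) with dR by (symmetry; now apply is_derive_unique).
    field; repeat split; lra.
Qed.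

Lemma seir_cubic_lyapunov_zcoord :
  exists m M be K, 0 < m /\ 0 < M /\ 0 < be /\ 0 < K /\
  forall Sf Ef If Rf, is_solution (seir_field Lam mu beta alpha gamma sigma xi Dl) Sf Ef If Rf ->
  cubic_lyapunov (fun t => sqrt (sqnorm (zcoord (Sf t - Ss, Ef t - Es, If t - Is, Rf t - Rs))))
    m M be K.
Proof.
  pose proof seir_p_pos as Hp; pose proof seir_tau_bounds as Htau; pose proof seir_kappa_pos as Hk.
  assert (Hm1 : 0 < mu + alpha) by lra; assert (Hm2 : 0 < mu + gamma + Dl) by lra.
  destruct (lyap_pos_definite mu _ _ _ _ _ hmu Hp Hm1 Hm2 (proj1 Htau) Hk) as [m [Hm Hlo]].
  destruct (lyap_bounded mu _ _ _ _ _ hmu Hp Hm1 Hm2 (proj1 Htau) Hk) as [M [HM Hhi]].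
  destruct (lyap_dot_reduced_le mu _ _ _ _ _ hmu Hp Hm1 Hm2 (proj1 Htau) Hk)
    as [be [K [Hbe [HK Hdot]]]].
  exists m, M, be, K; repeat split; try assumption.
  intros Sf Ef If Rf [[HS0 [HE0 [HI0 HR0]]] Hder].
  exists (fun s => seir_lyap (Sf s - Ss, Ef s - Es, If s - Is, Rf s - Rs)).
  exists (fun s => let z := zcoord (Sf s - Ss, Ef s - Es, If s - Is, Rf s - Rs) in
              lyap_diff mu seir_p (mu + alpha) (mu + gamma + Dl) seir_tau seir_kappa z
                (seir_reduced_field z)).
  split; [| split; [| split]].
  - unfold seir_lyap, lyap, zcoord, Rminus, Rdiv. right_continuity.
  - intros t Ht. unfold seir_reduced_field; rewrite <- zcoord_seir_field.
    apply is_derive_seir_lyap, (Hder t Ht).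
  - intros t _. rewrite pow2_sqrt by apply sqnorm_nonneg. split; [apply Hlo | apply Hhi].
  - intros t _. rewrite pow2_sqrt by apply sqnorm_nonneg. apply Hdot.
Qed.

Lemma seir_cubic_lyapunov :
  exists m M be K, 0 < m /\ 0 < M /\ 0 < be /\ 0 < K /\
  forall Sf Ef If Rf, is_solution (seir_field Lam mu beta alpha gamma sigma xi Dl) Sf Ef If Rf ->
  cubic_lyapunov (fun t => dist4 (Sf t, Ef t, If t, Rf t) (Ss, Es, Is, Rs)) m M be K.
Proof.
  destruct seir_cubic_lyapunov_zcoord as [m [M [be [K [Hm [HM [Hbe [HK Hlyap]]]]]]]].
  destruct zcoord_bounded as [Cz [HCz Hz]].
  destruct zcoord_coercive as [Cw [HCw Hw]].
  assert (Ha : 0 < / sqrt Cw) by (apply Rinv_0_lt_compat, sqrt_lt_R0; lra).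
  assert (Hb : 0 < sqrt Cz) by (apply sqrt_lt_R0; lra).
  exists (m * (/ sqrt Cw) ^ 2), (M * sqrt Cz ^ 2), (be * (/ sqrt Cw) ^ 2), (K * sqrt Cz ^ 3).
  repeat split; try (apply Rmult_lt_0_compat; [assumption | apply pow_lt; assumption]).
  intros Sf Ef If Rf Hsol.
  refine (cubic_lyapunov_equiv _ _ m M be K _ _ _ _ _ _ _ _ _ _ (Hlyap Sf Ef If Rf Hsol)); try lra.
  - intros t _; apply dist4_nonneg.
  - intros t _. set (w := (Sf t - Ss, Ef t - Es, If t - Is, Rf t - Rs)).
    change (dist4 (Sf t, Ef t, If t, Rf t) (Ss, Es, Is, Rs)) with (sqrt (sqnorm w)).
    split.
    + apply Rmult_le_reg_l with (sqrt Cw); [apply sqrt_lt_R0; lra |].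
      rewrite <- Rmult_assoc, Rinv_r, Rmult_1_l by (apply Rgt_not_eq, sqrt_lt_R0; lra).
      apply sqrt_le_sqrt_mult; [lra | apply sqnorm_nonneg | apply Hw].
    + apply sqrt_le_sqrt_mult; [lra | apply sqnorm_nonneg | apply Hz].
Qed.

End SEIR.

Theorem lemma4 (Lam mu beta alpha gamma delta sigma xi N_old kappa kappa_old : R)
  (hLam : 0 < Lam) (hmu : 0 < mu) (hbeta : 0 < beta) (halpha : 0 < alpha)
  (hgamma : 0 < gamma) (hdelta : 0 < delta)
  (hsigma : 0 <= sigma < 1) (hxi : 0 <= xi)
  (hN : 0 <= N_old <= 1) (hk : 0 <= kappa <= 1) (hko : 0 <= kappa_old <= 1)
  (Ss Es Is Rs : R) :
  let Dl := Delta_rate delta kappa kappa_old N_old in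
  let F := seir_field Lam mu beta alpha gamma sigma xi Dl in
  repro_number Lam mu beta alpha gamma sigma Dl > 1 ->
  is_equilibrium F (Ss, Es, Is, Rs) ->
  Ss = Lam / (mu * repro_number Lam mu beta alpha gamma sigma Dl) ->
  0 < Es -> 0 < Is -> 0 < Rs ->
  locally_asymptotically_stable F (Ss, Es, Is, Rs).
Proof.
  (* [0 < Lam], [R0 > 1], [0 < Rs] and the value of [Ss] are not needed: with [0 < Es] and
     [0 < Is] the equilibrium equations already force [Ss = Lam / (mu R0)]
     ([equilibrium_S_value]). *)
  intros Dl F _ Heq _ HE HI _.
  assert (HDl : 0 <= Dl) by (unfold Dl, Delta_rate; apply Rmult_le_pos; nra).
  destruct (seir_cubic_lyapunov Lam mu beta alpha gamma sigma xi Dl Ss Es Is Rs)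
    as [m [M [be [K [Hm [HM [Hbe [HK Hlyap]]]]]]]]; try (assumption || lra).
  assert (Hr : 0 < be / (2 * K)) by (apply Rdiv_lt_0_compat; lra).
  assert (Hs : 0 < sqrt (m / M)) by (apply sqrt_lt_R0, Rdiv_lt_0_compat; lra).
  split; [exact Heq | split].
  - intros eps Heps. exists (Rmin (be / (2 * K)) eps * sqrt (m / M)).
    split; [apply Rmult_lt_0_compat; [apply Rmin_glb_lt |]; lra |].
    intros Sf Ef If Rf Hsol.
    exact (proj1 (cubic_lyapunov_stable_attractive _ m M be K Hm HM Hbe HK
                    (fun t _ => dist4_nonneg _ _) (Hlyap Sf Ef If Rf Hsol)) eps Heps).
  - exists (be / (2 * K) * sqrt (m / M)). split; [nra |].
    intros Sf Ef If Rf Hsol.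
    exact (proj2 (cubic_lyapunov_stable_attractive _ m M be K Hm HM Hbe HK
                    (fun t _ => dist4_nonneg _ _) (Hlyap Sf Ef If Rf Hsol))).
Qed.
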